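(* Let $G$ be a graph and let $S\subseteq V(G)$ be a twin cover of $G$ with $|S|=k$. Let $C_i$ and $C_j$ be connected components of $G-S$, each with more than $k$ vertices, such that $|C_i|\equiv|C_j|\pmod 2$ and $N(u)\cap S=N(w)\cap S$ for $u\in C_i$, $w\in C_j$. If $\sigma$ is a layout of $G$ and $q$ is an integer such that every vertex $v\in C_i\cup C_j$ satisfies $|\{s\in S: s<_\sigma v\}|+1=q$, then $\gamma^+(C_i,\sigma)=\gamma^+(C_j,\sigma)$.
   Context: All graphs are finite, simple and undirected. For a layout (linear ordering) $\sigma$ of $V(G)$ and $v\in V(G)$, $N_L(v,\sigma)$ and $N_R(v,\sigma)$ are the sets of neighbours of $v$ preceding and following $v$, and $\mathcal{I}(v,\sigma)=\big||N_L(v,\sigma)|-|N_R(v,\sigma)|\big|$. A twin cover of $G$ is a set $S\subseteq V(G)$ such that every connected component $X$ of $G-S$ is a set of true twins in $G$ ($N[u]=N[v]$ for all $u,v\in X$). Let $\gamma(\ell)=\ell^2/2$ if $\ell$ is even and $\gamma(\ell)=(\ell^2-1)/2$ if $\ell$ is odd. For a component $C$ of $G-S$, $\gamma^+(C,\sigma)=\sum_{v\in C}\mathcal{I}(v,\sigma)-\gamma(|C|)$ (excess imbalance). The number $|\{s\in S:s<_\sigma v\}|+1$ is the location of $v$ in $\sigma$; the hypothesis says $C_i$ and $C_j$ are placed at the same location. *)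

From mathcomp Require Import all_boot all_order all_algebra.
Set Implicit Arguments. Unset Strict Implicit. Unset Printing Implicit Defensive.
Import Order.TTheory GRing.Theory Num.Theory.

Definition simple_graph (T : finType) (e : rel T) :=
  symmetric e /\ irreflexive e.

Definition nbhd (T : finType) (e : rel T) (v : T) : {set T} := [set w | e v w].
Definition cnbhd (T : finType) (e : rel T) (v : T) : {set T} :=
  [set w | (w == v) || e v w].

Definition del_rel (T : finType) (e : rel T) (S : {set T}) : rel T :=
  [rel x y | [&& x \notin S, y \notin S & e x y]].

Definition is_component (T : finType) (e : rel T) (S : {set T}) (C : {set T}) :=
  exists2 x, x \notin S & C = [set y | connect (del_rel e S) x y].

Definition twin_cover (T : finType) (e : rel T) (S : {set T}) :=
  forall C, is_component e S C ->
    forall u v, u \in C -> v \in C -> cnbhd e u = cnbhd e v.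

(* A layout is a linear ordering of V(G), given as a bijection
   sigma : T -> 'I_#|T| (position of each vertex); u <_sigma v iff
   sigma u < sigma v. *)
Definition layout (T : finType) (sigma : T -> 'I_#|T|) := bijective sigma.

Definition NL (T : finType) (e : rel T) (sigma : T -> 'I_#|T|) (v : T) : {set T} :=
  [set u in nbhd e v | sigma u < sigma v].
Definition NR (T : finType) (e : rel T) (sigma : T -> 'I_#|T|) (v : T) : {set T} :=
  [set u in nbhd e v | sigma v < sigma u].

Definition imbalance (T : finType) (e : rel T) (sigma : T -> 'I_#|T|) (v : T) : nat :=
  absz (Posz #|NL e sigma v| - Posz #|NR e sigma v|)%R.

Definition gamma (l : nat) : nat :=
  if odd l then (l ^ 2 - 1) %/ 2 else l ^ 2 %/ 2.

Definition excess_imbalance (T : finType) (e : rel T) (sigma : T -> 'I_#|T|)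
  (C : {set T}) : int :=
  (Posz (\sum_(v in C) imbalance e sigma v) - Posz (gamma #|C|))%R.

Definition location (T : finType) (sigma : T -> 'I_#|T|) (S : {set T}) (v : T) : nat :=
  #|[set s in S | sigma s < sigma v]|.+1.

From mathcomp Require Import all_boot all_order all_algebra zify.
Import Order.TTheory GRing.Theory Num.Theory.
Set Implicit Arguments. Unset Strict Implicit. Unset Printing Implicit Defensive.

(** A vertex v of a component C of G - S is adjacent to C \ v and to a set
    N of vertices of S.  If N is the same for C_i and C_j and all their
    vertices lie in the same gap of S, the neighbours of v in S split into l
    on the left and r on the right independently of v; with d = l - r and i
    the rank of v inside C this gives I(v) = |d + 2i - |C| + 1|.  Summing over
    the ranks, the imbalance of C is sum_(i < |C|) |d + 2i - |C| + 1|, and as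
    long as |d| < |C| adding two vertices to C adds exactly 2(|C| + 1) to it,
    which is also gamma(|C| + 2) - gamma(|C|).  So the excess imbalance only
    depends on d and the parity of |C|, since |d| <= |N| <= |S| < |C|. *)

Section ImbalanceProfile.
Local Open Scope ring_scope.

Definition imbalance_profile (d : int) (n : nat) : int :=
  \sum_(i < n) `|d + (2 * i)%N%:Z - n%:Z + 1|.

Definition excess_profile (d : int) (n : nat) : int :=
  imbalance_profile d n - (gamma n)%:Z.

Lemma gammaSS n : gamma n.+2 = (gamma n + 2 * n.+1)%N.
Proof.
rewrite /gamma !oddS negbK; case: (boolP (odd n)) => [odd_n|_]; last lia.
have : (0 < n)%N by case: n odd_n.
lia.
Qed.

(* The two new terms are the extreme ones, whose signs are fixed by the bound
   on d; the middle terms are those of the profile of length n. *)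
Lemma imbalance_profileSS (d : int) n : `|d| <= n.+1%:Z ->
  imbalance_profile d n.+2 = imbalance_profile d n + (2 * n.+1)%N%:Z.
Proof.
rewrite ler_norml => /andP[d_ge d_le].
rewrite /imbalance_profile big_ord_recl big_ord_recr /=.
have -> : \sum_(i < n) `|d + (2 * bump 0 (widen_ord (leqnSn n) i))%N%:Z - n.+2%:Z + 1|
        = \sum_(i < n) `|d + (2 * i)%N%:Z - n%:Z + 1|.
  by apply: eq_bigr => i _; congr `|_|; rewrite /bump /=; lia.
by rewrite /bump /= ler0_norm ?ger0_norm; lia.
Qed.

Lemma excess_profileSS (d : int) n : `|d| <= n.+1%:Z ->
  excess_profile d n.+2 = excess_profile d n.
Proof. by move=> d_le; rewrite /excess_profile imbalance_profileSS // gammaSS; lia. Qed.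

Lemma excess_profile_parity (d : int) n m : `|d| < n%:Z -> `|d| < m%:Z -> odd n = odd m ->
  excess_profile d n = excess_profile d m.
Proof.
wlog le_nm : n m / (n <= m)%N.
  move=> parity d_n d_m odd_nm; case: (leqP n m) => [|/ltnW] le; first exact: parity.
  by symmetry; apply: parity.
move=> d_n _ odd_nm; have [t ->] : exists t, m = (n + 2 * t)%N.
  by exists ((m - n) %/ 2)%N; move: odd_nm; rewrite -(subnK le_nm) oddD; lia.
elim: t => [|t IHt]; first by rewrite addn0.
have -> : (n + 2 * t.+1 = (n + 2 * t).+2)%N by lia.
by rewrite excess_profileSS //; apply: le_trans (ltW d_n) _; lia.
Qed.

End ImbalanceProfile.

Section LayoutOrder.
Variables (T : finType) (sigma : T -> 'I_#|T|).

Definition left_of (A : {set T}) (v : T) : {set T} :=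
  [set u in A | sigma u < sigma v].
Definition right_of (A : {set T}) (v : T) : {set T} :=
  [set u in A | sigma v < sigma u].

Implicit Types (A B : {set T}) (v w : T).

Lemma left_of_sub A v : left_of A v \subset A.
Proof. by rewrite /left_of setIdE subsetIl. Qed.

Lemma right_of_sub A v : right_of A v \subset A.
Proof. by rewrite /right_of setIdE subsetIl. Qed.

Lemma left_ofU A B v : left_of (A :|: B) v = left_of A v :|: left_of B v.
Proof. by apply/setP=> u; rewrite !inE andb_orl. Qed.

Lemma right_ofU A B v : right_of (A :|: B) v = right_of A v :|: right_of B v.
Proof. by apply/setP=> u; rewrite !inE andb_orl. Qed.

Lemma left_of_setD1 A v : left_of (A :\ v) v = left_of A v.
Proof. by apply/setP=> u; rewrite !inE; case: eqVneq => [->|]; rewrite ?ltnn ?andbF. Qed.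

Lemma right_of_setD1 A v : right_of (A :\ v) v = right_of A v.
Proof. by apply/setP=> u; rewrite !inE; case: eqVneq => [->|]; rewrite ?ltnn ?andbF. Qed.

Lemma left_of_subset A B v : A \subset B -> left_of A v = A :&: left_of B v.
Proof.
move=> /subsetP sAB; apply/setP=> u; rewrite !inE.
by case: (boolP (u \in A)) => // /sAB ->.
Qed.

Lemma left_of_location A v w :
  location sigma A v = location sigma A w -> left_of A v = left_of A w.
Proof.
have mono x y : (sigma x <= sigma y)%N -> left_of A x \subset left_of A y.
  by move=> le; apply/subsetP=> u; rewrite !inE => /andP[-> /leq_trans]; apply.
move=> [eq_card]; apply/eqP; case: (leqP (sigma v) (sigma w)) => [|/ltnW] le.
  by rewrite eqEcard mono // eq_card leqnn.
by rewrite eq_sym eqEcard mono // eq_card leqnn.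
Qed.

Hypothesis sigma_inj : injective sigma.

Lemma right_ofE A v : v \notin A -> right_of A v = A :\: left_of A v.
Proof.
move=> vA; apply/setP=> u; rewrite !inE.
case: (boolP (u \in A)) => [uA|]; rewrite ?andbF // !andbT.
have : sigma u != sigma v by apply: contraNneq vA => /sigma_inj <-.
by rewrite -val_eqE /=; case: ltngtP.
Qed.

Lemma card_left_right_notin A v : v \notin A ->
  #|A| = (#|left_of A v| + #|right_of A v|)%N.
Proof.
move=> vA; rewrite right_ofE // cardsDS ?left_of_sub // subnKC //.
exact/subset_leq_card/left_of_sub.
Qed.

Lemma card_left_right A v : v \in A ->
  #|A| = (#|left_of A v| + #|right_of A v|).+1.
Proof.
move=> vA; rewrite (cardsD1 v A) vA -left_of_setD1 -right_of_setD1.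
by rewrite -card_left_right_notin ?setD11.
Qed.

(* The rank [#|left_of A v|] is a bijection from A onto [0, #|A|). *)
Lemma sum_left_of_card (R : nmodType) A (F : nat -> R) :
  (\sum_(v in A) F #|left_of A v| = \sum_(i < #|A|) F i)%R.
Proof.
pose rank v := #|left_of A v|.
have rank_lt v : v \in A -> (rank v < #|A|)%N.
  move=> vA; apply: proper_card; rewrite properE left_of_sub /=.
  by apply/subsetPn; exists v; rewrite // inE ltnn andbF.
have rank_mono v w : v \in A -> (sigma v < sigma w)%N -> (rank v < rank w)%N.
  move=> vA lt; apply: proper_card; rewrite properE.
  apply/andP; split; last by apply/subsetPn; exists v; rewrite !inE ?vA ?lt ?ltnn.
  by apply/subsetP=> u; rewrite !inE => /andP[-> /ltn_trans]; apply.
have rank_inj : {in A &, injective rank}.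
  move=> v w vA wA eq_rank; case: (ltngtP (sigma v) (sigma w)) => [lt|lt|/val_inj].
  - by have := rank_mono v w vA lt; rewrite eq_rank ltnn.
  - by have := rank_mono w v wA lt; rewrite eq_rank ltnn.
  - exact: sigma_inj.
have rank_uniq : uniq (map rank (enum A)).
  by rewrite map_inj_in_uniq ?enum_uniq // => v w; rewrite !mem_enum; apply: rank_inj.
have rank_perm : perm_eq (map rank (enum A)) (iota 0 #|A|).
  apply: uniq_perm; rewrite ?iota_uniq //; apply: (uniq_min_size rank_uniq _ _).2.
  - by move=> i /mapP[v]; rewrite mem_enum mem_iota => /rank_lt lt ->.
  - by rewrite size_iota size_map -cardE.
rewrite -big_enum /= -(big_map rank xpredT) (perm_big _ rank_perm).
by rewrite -(big_mkord xpredT F) /index_iota subn0.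
Qed.

End LayoutOrder.

Section TwinCover.
Variables (T : finType) (e : rel T) (S : {set T}).
Hypotheses (e_simple : simple_graph e) (S_twin : twin_cover e S).
Implicit Types (A B C : {set T}) (v : T).

Lemma component_disjoint C : is_component e S C -> [disjoint C & S].
Proof.
case=> x xS ->; rewrite disjoints_subset; apply/subsetP=> v.
rewrite !inE => /connectP[p x_p ->]; case/lastP: p x_p => [|p z] //=.
by rewrite rcons_path last_rcons => /andP[_ /and3P[]].
Qed.

Lemma nbhd_component C v : is_component e S C -> v \in C ->
  nbhd e v = (nbhd e v :&: S) :|: (C :\ v).
Proof.
move=> C_comp vC; have [_ e_irr] := e_simple.
apply/setP=> w; rewrite !inE.
case: (boolP (w \in S)) => wS /=; rewrite ?andbT ?andbF /=.
  by rewrite (disjointFl (component_disjoint C_comp) wS) andbF orbF.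
case: (eqVneq w v) => [->|wv] /=; first by rewrite e_irr.
apply/idP/idP => [vw|wC].
  have vS := disjointFr (component_disjoint C_comp) vC.
  move: vC; case: C_comp => x _ ->; rewrite !inE => xv.
  by apply: connect_trans xv (connect1 _); rewrite /del_rel /= vS wS vw.
(* w is a true twin of v, so w lies in the closed neighbourhood of v *)
have : w \in cnbhd e w by rewrite inE eqxx.
by rewrite -(S_twin C_comp vC wC) inE (negbTE wv).
Qed.

Variable sigma : T -> 'I_#|T|.
Hypothesis sigma_inj : injective sigma.

Lemma imbalance_component C v : is_component e S C -> v \in C ->
  Posz (imbalance e sigma v) =
  `|#|left_of sigma (nbhd e v :&: S) v|%:Z - #|right_of sigma (nbhd e v :&: S) v|%:Z
    + (2 * #|left_of sigma C v|)%N%:Z - #|C|%:Z + 1|%R.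
Proof.
move=> C_comp vC.
have card_disjU A B : A \subset nbhd e v :&: S -> B \subset C ->
    #|A :|: B| = (#|A| + #|B|)%N.
  move=> AN BC; apply/eqP; rewrite (leq_card_setU A B).2 disjoint_sym.
  apply: disjointWl BC (disjointWr (subset_trans AN (subsetIr _ _)) _).
  exact: component_disjoint.
rewrite /imbalance abszE.
rewrite -[NL _ _ _]/(left_of sigma (nbhd e v) v) -[NR _ _ _]/(right_of sigma (nbhd e v) v).
rewrite [in LHS](nbhd_component C_comp vC) left_ofU right_ofU.
rewrite left_of_setD1 right_of_setD1 !card_disjU ?left_of_sub ?right_of_sub //.
rewrite [in RHS](card_left_right sigma_inj vC).
congr `|_|%R; lia.
Qed.

Lemma excess_imbalance_component C N L : is_component e S C ->
  {in C, forall v, nbhd e v :&: S = N /\ left_of sigma N v = L} ->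
  excess_imbalance e sigma C = excess_profile (#|L|%:Z - #|N :\: L|%:Z)%R #|C|.
Proof.
move=> C_comp NL_eq; rewrite /excess_imbalance /excess_profile /imbalance_profile.
rewrite -(sum_left_of_card sigma_inj C
  (fun i => `|#|L|%:Z - #|N :\: L|%:Z + (2 * i)%N%:Z - #|C|%:Z + 1|%R)).
congr (_ - _)%R; rewrite (big_morph Posz PoszD (erefl _)).
apply: eq_bigr => v vC; have [N_eq L_eq] := NL_eq v vC.
have vN : v \notin N.
  by rewrite -N_eq inE (disjointFr (component_disjoint C_comp) vC) andbF.
by rewrite (imbalance_component C_comp vC) N_eq (right_ofE sigma_inj vN) L_eq.
Qed.

End TwinCover.

Theorem corollary3 (T : finType) (e : rel T) (S : {set T})
  (Ci Cj : {set T}) (sigma : T -> 'I_#|T|) (q : nat) :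
  simple_graph e ->
  twin_cover e S ->
  is_component e S Ci -> is_component e S Cj ->
  #|S| < #|Ci| -> #|S| < #|Cj| ->
  odd #|Ci| = odd #|Cj| ->
  (forall u w, u \in Ci -> w \in Cj -> nbhd e u :&: S = nbhd e w :&: S) ->
  layout sigma ->
  (forall v, v \in Ci :|: Cj -> location sigma S v = q) ->
  excess_imbalance e sigma Ci = excess_imbalance e sigma Cj.
Proof.
move=> e_simple S_twin Ci_comp Cj_comp Ci_big Cj_big odd_eq nbhd_eq lay loc_eq.
have sigma_inj : injective sigma := bij_inj lay.
have [wi wiCi] : exists wi, wi \in Ci by apply/set0Pn; rewrite -card_gt0 (leq_ltn_trans _ Ci_big).
have [wj wjCj] : exists wj, wj \in Cj by apply/set0Pn; rewrite -card_gt0 (leq_ltn_trans _ Cj_big).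
set N := nbhd e wi :&: S; set L := N :&: left_of sigma S wi.
have NL_eq : {in Ci :|: Cj, forall v, nbhd e v :&: S = N /\ left_of sigma N v = L}.
  move=> v vC; split.
    case/setUP: vC => [vCi|vCj]; last by rewrite /N (nbhd_eq wi v).
    by rewrite (nbhd_eq v wj) // /N (nbhd_eq wi wj).
  rewrite /L (left_of_subset _ _ (subsetIr _ _ : N \subset S)); congr (_ :&: _).
  by apply: left_of_location; rewrite !loc_eq // inE wiCi.
have d_small (C : {set T}) : #|S| < #|C| -> (`|#|L|%:Z - #|N :\: L|%:Z| < #|C|%:Z)%R.
  have : #|L| + #|N :\: L| <= #|S|.
    by rewrite cardsDS ?subsetIl // subnKC ?subset_leq_card ?subsetIl ?subsetIr.
  by rewrite ltr_norml; lia.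
have excess_eq C : is_component e S C -> C \subset Ci :|: Cj ->
    excess_imbalance e sigma C = excess_profile (#|L|%:Z - #|N :\: L|%:Z)%R #|C|.
  move=> C_comp /subsetP sub.
  apply: (excess_imbalance_component e_simple S_twin sigma_inj C_comp) => v /sub.
  exact: NL_eq.
rewrite !excess_eq ?subsetUl ?subsetUr //.
exact: excess_profile_parity (d_small _ Ci_big) (d_small _ Cj_big) odd_eq.
Qed.
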